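(* Let $R$ be a ring with a separated filtration $u:R\to\mathbb{Z}\cup\{\infty\}$ with respect to which $R$ is complete, and let $(\sigma,\delta)$ be a skew derivation on $R$ compatible with $u$. (i) The left $R$-module $R^b[[x;\sigma,\delta]]=\{\sum_{n\ge0}r_nx^n: r_n\in R,\ u(r_n)+\tfrac12n\to\infty\text{ as }n\to\infty\}$ is a ring, with multiplication given by extending the rule $xa=\sigma(a)x+\delta(a)$ ($a\in R$) to a continuous $R$-linear multiplication in a unique way. (ii) Define $f_u:R^b[[x;\sigma,\delta]]\to\tfrac12\mathbb{Z}\cup\{\infty\}$ by $f_u(\sum_{i\ge0}r_ix^i)=\inf_{i\ge0}\{u(r_i)+\tfrac12 i\}$, and identify $R$ with the subring of constant series. Then $f_u$ is a ring filtration with $f_u|_R=u$, $R^b[[x;\sigma,\delta]]$ is complete with respect to $f_u$, and the identity on $\mathrm{gr}_u(R)$ extends to an isomorphism of graded rings $\mathrm{gr}_{f_u}(R^b[[x;\sigma,\delta]])\to(\mathrm{gr}_u(R))[Z]$ mapping (the principal symbol of) $x$ to $Z$.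
   Context: A filtration satisfies $u(0)=\infty$, $u(x+y)\ge\min\{u(x),u(y)\}$, $u(xy)\ge u(x)+u(y)$; separated means $u(x)=\infty\iff x=0$; $\mathrm{gr}_u(R)=\bigoplus_\lambda F_\lambda R/F_{\lambda^+}R$ with $F_\lambda R=\{u\ge\lambda\}$, $F_{\lambda^+}R=\{u>\lambda\}$. A skew derivation is $(\sigma,\delta)$ with $\sigma$ an automorphism and $\delta$ additive with $\delta(ab)=\delta(a)b+\sigma(a)\delta(b)$; it is compatible with $u$ if $\deg_u(\sigma-\mathrm{id})>0$ and $\deg_u(\delta)>0$, where $\deg_u(d)=\inf_{x\ne0}\{u(d(x))-u(x)\}$. *)

From HB Require Import structures.
From mathcomp Require Import all_boot all_order all_algebra.
From mathcomp Require Import boolp classical_sets constructive_ereal ereal.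
Set Implicit Arguments. Unset Strict Implicit. Unset Printing Implicit Defensive.
Import Order.TTheory GRing.Theory Num.Theory.
Local Open Scope ring_scope.
Local Open Scope classical_set_scope.
Local Open Scope ereal_scope.

(* Values Z ∪ {∞} and ½Z ∪ {∞} are represented inside \bar rat,
   with ∞ = +oo.  *)

Definition int_valued {T : Type} (v : T -> \bar rat) : Prop :=
  forall x, v x = +oo \/ exists z : int, v x = (z%:~R : rat)%:E.

Definition halfint_valued {T : Type} (P : T -> Prop) (v : T -> \bar rat) : Prop :=
  forall x, P x -> v x = +oo \/ exists z : int, v x = ((z%:~R : rat) / 2%:R)%:E.

Definition is_filtration_on {T : Type} (P : T -> Prop) (zero : T)
  (add mul : T -> T -> T) (v : T -> \bar rat) : Prop :=
  v zero = +oo /\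
  (forall x y, P x -> P y -> Order.min (v x) (v y) <= v (add x y)) /\
  (forall x y, P x -> P y -> v x + v y <= v (mul x y)).

Definition filtration (R : pzRingType) (u : R -> \bar rat) : Prop :=
  is_filtration_on (fun _ => True) 0%R +%R *%R u.

Definition separated_filt (R : pzRingType) (u : R -> \bar rat) : Prop :=
  forall x, u x = +oo <-> x = 0%R.

Definition cauchy_seq {T : Type} (sub : T -> T -> T) (v : T -> \bar rat)
  (s : nat -> T) : Prop :=
  forall N : rat, exists m, forall i j, (m <= i)%N -> (m <= j)%N ->
    N%:E <= v (sub (s i) (s j)).

Definition converges_to {T : Type} (sub : T -> T -> T) (v : T -> \bar rat)
  (s : nat -> T) (a : T) : Prop :=
  forall N : rat, exists m, forall i, (m <= i)%N -> N%:E <= v (sub (s i) a).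

Definition complete_on {T : Type} (P : T -> Prop) (sub : T -> T -> T)
  (v : T -> \bar rat) : Prop :=
  forall s : nat -> T, (forall n, P (s n)) -> cauchy_seq sub v s ->
    exists a, P a /\ converges_to sub v s a.

Definition deg_u (R : pzRingType) (u : R -> \bar rat) (d : R -> R) : \bar rat :=
  ereal_inf [set u (d x) - u x | x in [set x : R | x != 0%R]].

Definition ring_automorphism (R : pzRingType) (s : R -> R) : Prop :=
  (forall a b, s (a + b)%R = (s a + s b)%R) /\
  (forall a b, s (a * b)%R = (s a * s b)%R) /\ s 1%R = 1%R /\ bijective s.

Definition skew_derivation (R : pzRingType) (s d : R -> R) : Prop :=
  ring_automorphism s /\
  (forall a b, d (a + b)%R = (d a + d b)%R) /\
  (forall a b, d (a * b)%R = (d a * b + s a * d b)%R).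

Definition compatible (R : pzRingType) (u : R -> \bar rat) (s d : R -> R) : Prop :=
  0 < deg_u u (fun a => s a - a)%R /\ 0 < deg_u u d.

Section Series.
Variable R : pzRingType.
Definition ser := nat -> R.
Definition sadd (f g : ser) : ser := fun n => (f n + g n)%R.
Definition sopp (f : ser) : ser := fun n => (- f n)%R.
Definition ssub (f g : ser) : ser := fun n => (f n - g n)%R.
Definition szero : ser := fun _ => 0%R.
Definition sscal (a : R) (f : ser) : ser := fun n => (a * f n)%R.
Definition smono (i : nat) (a : R) : ser := fun n => if n == i then a else 0%R.
Definition sconst (a : R) : ser := smono 0 a.
Definition sone : ser := sconst 1%R.
Definition sX : ser := smono 1 1%R.
Definition strunc (n : nat) (r : nat -> R) : ser :=
  fun k => if (k < n)%N then r k else 0%R.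

Definition in_Rb (u : R -> \bar rat) (f : ser) : Prop :=
  forall N : rat, exists n0, forall n, (n0 <= n)%N ->
    N%:E <= u (f n) + ((n%:R : rat) / 2%:R)%:E.

Definition f_u (u : R -> \bar rat) (f : ser) : \bar rat :=
  ereal_inf [set u (f i) + ((i%:R : rat) / 2%:R)%:E | i in [set: nat]].

Definition skew_mult (u : R -> \bar rat) (s d : R -> R)
  (mul : ser -> ser -> ser) : Prop :=
  (forall f g, in_Rb u f -> in_Rb u g -> in_Rb u (mul f g)) /\
  (forall f g h, in_Rb u f -> in_Rb u g -> in_Rb u h ->
     mul (mul f g) h = mul f (mul g h)) /\
  (forall f g h, in_Rb u f -> in_Rb u g -> in_Rb u h ->
     mul f (sadd g h) = sadd (mul f g) (mul f h)) /\
  (forall f g h, in_Rb u f -> in_Rb u g -> in_Rb u h ->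
     mul (sadd f g) h = sadd (mul f h) (mul g h)) /\
  (* R-linearity / R is the subring of constants acting by scalars *)
  (forall a f, in_Rb u f -> mul (sconst a) f = sscal a f) /\
  (forall a, mul sX (sconst a) = sadd (smono 1 (s a)) (sconst (d a))) /\
  (forall n, mul sX (smono n 1%R) = smono n.+1 1%R) /\
  (forall f g, in_Rb u f -> in_Rb u g -> forall N : rat, exists M : rat,
     forall f' g', in_Rb u f' -> in_Rb u g' ->
       M%:E <= f_u u (ssub f' f) -> M%:E <= f_u u (ssub g' g) ->
       N%:E <= f_u u (ssub (mul f' g') (mul f g))).
End Series.

(* The canonical graded map
     Phi : gr_u(R)[Z] --> gr_{f_u}(R^b[[x;σ,δ]]),
     (class of r_i in gr_u(R)_{λ-i/2}) Z^i  |-->  class of  sum_i r_i x^i  in degree λ,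
   which restricts to the identity-induced map on gr_u(R) (i = 0) and sends
   the symbol of 1 times Z to the principal symbol of x, is written out
   explicitly on representatives (Z has degree 1/2).  [gr_iso u mul] says:
   Phi is well defined, bijective in every degree λ ∈ ½Z, and multiplicative
   on homogeneous monomials; i.e. Phi is an isomorphism of graded rings, whose
   inverse is the isomorphism gr_{f_u}(R^b) -> gr_u(R)[Z] of the statement.
   (For λ - i/2 not an integer, gr_u(R)_{λ-i/2} = 0 and the conditions below
   are automatically consistent with that.) *)
Section GrIso.
Variable R : pzRingType.
Definition gr_iso (u : R -> \bar rat) (mul : ser R -> ser R -> ser R) : Prop :=
  forall m : int, let lam : rat := (m%:~R / 2%:R)%R in
  (* homogeneous elements of degree lam map into F_lam *)
  (forall n (r : nat -> R),
     (forall i, (i < n)%N -> (lam - (i%:R / 2%:R))%R%:E <= u (r i)) ->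
     lam%:E <= f_u u (strunc n r)) /\
  (* well defined and injective in degree lam *)
  (forall n (r : nat -> R),
     (forall i, (i < n)%N -> (lam - (i%:R / 2%:R))%R%:E <= u (r i)) ->
     (lam%:E < f_u u (strunc n r) <->
      forall i, (i < n)%N -> (lam - (i%:R / 2%:R))%R%:E < u (r i))) /\
  (* surjective in degree lam *)
  (forall f, in_Rb u f -> lam%:E <= f_u u f ->
     exists n (r : nat -> R),
       (forall i, (i < n)%N -> (lam - (i%:R / 2%:R))%R%:E <= u (r i)) /\
       lam%:E < f_u u (ssub f (strunc n r))).
Definition gr_mult (u : R -> \bar rat) (mul : ser R -> ser R -> ser R) : Prop :=
  (* Phi(a Z^i) Phi(b Z^j) = Phi(ab Z^(i+j)) for a in F_mu, b in F_nu *)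
  forall (mu nu : int) (a b : R) (i j : nat),
    (mu%:~R : rat)%:E <= u a -> (nu%:~R : rat)%:E <= u b ->
    ((mu + nu)%:~R + ((i + j)%:R / 2%:R))%R%:E <
      f_u u (ssub (mul (smono i a) (smono j b)) (smono (i + j) (a * b)%R)).
End GrIso.

(* The product is [f g = sum_i f_i x^i g], where [x] acts on a series by
   [(x g)_m = sigma (g_(m-1)) + delta (g_m)].  Since [u] is integer valued,
   compatibility means [u (delta a) >= u a + 1] and [u (sigma a) >= u a], so
   multiplication by [x] raises [f_u] by at least 1/2: for [f] in [R^b] the
   terms [f_i x^i g] tend to 0 and the sum converges coefficientwise because
   [R] is complete.  Associativity reduces to [x (g h) = (x g) h], which holds
   term by term and passes to the infinite sums by continuity.  Any continuous
   multiplication with [x a = sigma a x + delta a] agrees with this one on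
   monomials, hence on polynomials, which are dense in [R^b].  Finally
   [sigma] is the identity and [delta] vanishes modulo higher filtration, so
   [a x^i * b x^j] and [a b x^(i+j)] have the same principal symbol; as [f_u]
   takes values in [1/2 Z], this identifies the associated graded ring with
   [gr_u(R)[Z]]. *)

From HB Require Import structures.
From mathcomp Require Import all_boot all_order all_algebra.
From mathcomp Require Import boolp classical_sets constructive_ereal ereal.
From mathcomp Require Import ring lra zify.
Import Order.TTheory GRing.Theory Num.Theory.
Set Implicit Arguments. Unset Strict Implicit.
Local Open Scope ring_scope.

Section Additive.
Variables (V W : zmodType) (f : V -> W).
Hypothesis fD : forall a b, f (a + b) = f a + f b.

Lemma additive0 : f 0 = 0.
Proof. by apply: (@addrI _ (f 0)); rewrite -fD !addr0. Qed.

Lemma additiveN a : f (- a) = - f a.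
Proof. by apply/eqP; rewrite -addr_eq0 -fD addNr additive0. Qed.

Lemma additiveB a b : f (a - b) = f a - f b.
Proof. by rewrite fD additiveN. Qed.

Lemma additive_sum (a : nat -> V) m n :
  f (\sum_(m <= i < n) a i) = \sum_(m <= i < n) f (a i).
Proof. by elim/big_rec2: _ => [|i y1 y2 _ <-]; rewrite ?additive0 ?fD. Qed.

End Additive.

Lemma int_lt_addr1 (z w : int) : (z%:~R < w%:~R :> rat) -> z%:~R + 1 <= w%:~R :> rat.
Proof. by rewrite ltr_int -lezD1 -(ler_int rat) intrD. Qed.

Lemma half_lt_int (k z : int) :
  (k%:~R / 2%:R < z%:~R :> rat) -> k%:~R / 2%:R + 1 / 2%:R <= z%:~R :> rat.
Proof.
move=> h; have /int_lt_addr1 : (k%:~R < (z + z)%:~R :> rat) by rewrite intrD; lra.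
rewrite intrD; lra.
Qed.

Local Open Scope ereal_scope.
Local Open Scope classical_set_scope.

(** * Infima in the extended rationals *)

Section ExtendedInf.
Variable R : realFieldType.
Implicit Types (S : set (\bar R)) (m : \bar R).

Lemma ereal_sup_supremums S m : S !=set0 -> supremums S m -> ereal_sup S = m.
Proof.
move=> /set0P S0 Sm; rewrite /ereal_sup /supremum ifN //.
by apply: xget_subset1 Sm _; exact: is_subset1_supremums.
Qed.

Lemma ereal_inf_attained S m : S m -> lbound S m -> ereal_inf S = m.
Proof.
move=> Sm lbm; rewrite /ereal_inf (@ereal_sup_supremums _ (- m)) ?oppeK //.
  by exists (- m), m.
split=> [_ [y Sy <-]|v ubv]; first by rewrite leeN2; exact: lbm.
by apply: ubv; exists m.
Qed.

Lemma ereal_inf_unbounded S :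
  (forall r : R, exists2 y, S y & y < r%:E) -> ereal_inf S = -oo.
Proof.
move=> unb; rewrite /ereal_inf (@ereal_sup_supremums _ +oo) //.
  by have [y Sy _] := unb 0%R; exists (- y), y.
split=> [y _|v ubv]; first by rewrite leey.
case: v ubv => [r||] ubv //.
  have [y Sy ltyr] := unb (- r)%R.
  by move: (ubv (- y) (ex_intro2 _ _ y Sy erefl)); rewrite leeNl -EFinN leNgt ltyr.
have [y Sy] := unb 0%R.
by move: (ubv (- y) (ex_intro2 _ _ y Sy erefl)); rewrite leeNy_eq eqe_oppLR /= => /eqP ->.
Qed.

End ExtendedInf.

(* Over [rat] a set need not have an infimum, in which case [ereal_inf]
   returns the junk value [+oo]; sets of half-integers always have one. *)
Lemma ereal_inf_halfint_lbound (S : set (\bar rat)) :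
  (forall y, S y -> y = +oo \/ exists k : int, y = (k%:~R / 2%:R)%:E) ->
  lbound S (ereal_inf S).
Proof.
move=> hS x Sx; case: (hS x Sx) => [->|[z xz]]; first by rewrite leey.
rewrite {}xz in Sx *.
pose P n := S (((z - n%:Z)%:~R : rat) / 2%:R)%:E.
have [[N0 boundP]|unbP] := pselect (exists N0, forall n, P n -> (n <= N0)%N).
  have P0 : exists n, `[< P n >] by exists 0%N; apply/asboolP; rewrite /P subr0.
  have [nm /asboolP Pnm maxnm] := ex_maxnP P0 (fun n Pn => boundP n (asboolW Pn)).
  rewrite (ereal_inf_attained Pnm); first by rewrite lee_fin ler_pM2r // ler_int; lia.
  move=> y Sy; case: (hS y Sy) => [->|[w yw]]; first by rewrite leey.
  rewrite {}yw in Sy *; rewrite lee_fin ler_pM2r // ler_int.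
  have [lewz|] := lerP w z; last by lia.
  have Pzw : P `|z - w|%N.
    rewrite /P (_ : z - `|z - w|%N%:Z = w)%R //.
    by rewrite gez0_abs ?subr_ge0 // opprB addrC subrK.
  by have := maxnm _ (asboolT Pzw); lia.
rewrite ereal_inf_unbounded ?leNye // => r.
apply: contrapT => noy; apply: unbP.
exists (Num.truncn (z%:~R - 2%:R * r)) => n Pn.
have : r%:E <= (((z - n%:Z)%:~R : rat) / 2%:R)%:E.
  by rewrite leNgt; apply/negP => lt; apply: noy; exists (((z - n%:Z)%:~R : rat) / 2%:R)%:E.
rewrite lee_fin intrB -[((n%:Z)%:~R : rat)]/(n%:R) => le_r.
have le_n : (n%:R <= z%:~R - 2%:R * r :> rat)%R by lra.
by rewrite truncn_ge_nat //; apply: le_trans le_n.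
Qed.

(** * Filtered rings *)

Section FilteredRing.
Variables (R : pzRingType) (u : R -> \bar rat).
Hypotheses (u_int : int_valued u) (u_filt : filtration u) (u_sep : separated_filt u).

Definition inF (N : rat) (x : R) := N%:E <= u x.

Lemma inF_le M N x : (M <= N)%R -> inF N x -> inF M x.
Proof. by move=> leMN; apply: le_trans; rewrite lee_fin. Qed.

Lemma u0 : u 0%R = +oo.
Proof. by case: u_filt. Qed.

Lemma inF0 N : inF N 0%R.
Proof. by rewrite /inF u0 leey. Qed.

Lemma inFD N x y : inF N x -> inF N y -> inF N (x + y)%R.
Proof.
case: u_filt => _ [uD _] Nx Ny; apply: le_trans (uD x y I I).
by rewrite le_min; apply/andP.
Qed.

Lemma inFM M N x y : inF M x -> inF N y -> inF (M + N) (x * y)%R.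
Proof.
case: u_filt => _ [_ uM] Mx Ny; apply: le_trans (uM x y I I).
by rewrite EFinD; exact: leeD.
Qed.

Lemma inF_sum N (a : nat -> R) m n : (forall i, (m <= i < n)%N -> inF N (a i)) ->
  inF N (\sum_(m <= i < n) a i)%R.
Proof.
move=> Na; rewrite big_nat_cond; apply: (big_ind (inF N)); [exact: inF0|exact: inFD|].
by move=> i /andP[/Na].
Qed.

Lemma inF_eq0 x : (forall N, inF N x) -> x = 0%R.
Proof.
move=> Nx; apply/u_sep; move: (Nx 0%R); rewrite /inF.
case ux: (u x) => [r||] //= _.
by move: (Nx (r + 1)%R); rewrite /inF ux lee_fin gerDl ler10.
Qed.

Lemma u_int_neq0 x : x != 0%R -> exists z : int, u x = (z%:~R : rat)%:E.
Proof.
move=> /eqP x0; case: (u_int x) => [/u_sep//|//].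
Qed.

Definition lipschitz (f : R -> R) := exists K, forall N y, inF N y -> inF (N + K) (f y).

Lemma lipschitz_mull a : lipschitz ( *%R a).
Proof.
have [->|/u_int_neq0[z uz]] := eqVneq a 0%R.
  by exists 0%R => N y _; rewrite mul0r; exact: inF0.
by exists (z%:~R)%R => N y Ny; rewrite addrC; apply: inFM; rewrite // /inF uz.
Qed.

Lemma lipschitz_opp : lipschitz -%R.
Proof. by have [K hK] := lipschitz_mull (-1)%R; exists K => N y /hK; rewrite mulN1r. Qed.

(* Since [u] is integer valued, a positive degree is at least 1. *)
Lemma inF_deg_u (d : R -> R) : d 0%R = 0%R -> 0 < deg_u u d ->
  forall N y, inF N y -> inF (N + 1) (d y).
Proof.
move=> d0 d_gt0 N y Ny.
have [->|y0] := eqVneq y 0%R; first by rewrite d0; exact: inF0.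
have [ud|[w udy]] := u_int (d y); first by rewrite /inF ud leey.
have : deg_u u d <= u (d y) - u y.
  apply: ereal_inf_halfint_lbound; last by exists y.
  move=> _ [x /= /u_int_neq0[v ux] <-]; rewrite ux.
  case: (u_int (d x)) => [->|[v' ->]]; [by left|right].
  by exists (2 * (v' - v))%R; rewrite -EFinB intrM intrB; congr (_%:E); field.
have [z uy] := u_int_neq0 y0.
move: Ny; rewrite /inF uy udy -EFinB !lee_fin => Nz /(lt_le_trans d_gt0).
rewrite lte_fin subr_gt0 => /int_lt_addr1; apply: le_trans; rewrite lerD2r //.
Qed.

Local Notation cvgR := (converges_to (fun a b => (a - b)%R) u).

Lemma cvgR_uniq s l1 l2 : cvgR s l1 -> cvgR s l2 -> l1 = l2.
Proof.
move=> sl1 sl2; have [K oppK] := lipschitz_opp.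
apply/eqP; rewrite -subr_eq0; apply/eqP; apply: inF_eq0 => N.
have [m1 hm1] := sl1 (N - K)%R; have [m2 hm2] := sl2 N; set i := maxn m1 m2.
have -> : (l1 - l2 = - (s i - l1) + (s i - l2))%R by rewrite opprB addrA subrK.
apply: inFD; last by apply: hm2; rewrite leq_maxr.
by rewrite -[N](subrK K); apply: oppK; apply: hm1; rewrite leq_maxl.
Qed.

Lemma cvgR_closed s l B m0 : cvgR s l -> (forall i, (m0 <= i)%N -> inF B (s i)) ->
  inF B l.
Proof.
move=> sl Bs; have [K oppK] := lipschitz_opp.
have [m hm] := sl (B - K)%R; set i := maxn m m0.
have -> : l = (s i + - (s i - l))%R by rewrite opprB addrC subrK.
apply: inFD; first by apply: Bs; rewrite leq_maxr.
by rewrite -[B](subrK K); apply: oppK; apply: hm; rewrite leq_maxl.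
Qed.

Definition tends0 (a : nat -> R) := forall N, exists m, forall i, (m <= i)%N -> inF N (a i).

Lemma tends0D a b : tends0 a -> tends0 b -> tends0 (fun i => a i + b i)%R.
Proof.
move=> a0 b0 N; have [m1 h1] := a0 N; have [m2 h2] := b0 N.
exists (maxn m1 m2) => i; rewrite geq_max => /andP[i1 i2].
by apply: inFD; [exact: h1|exact: h2].
Qed.

Lemma tends0_lipschitz f a : lipschitz f -> tends0 a -> tends0 (fun i => f (a i)).
Proof.
move=> [K fK] a0 N; have [m hm] := a0 (N - K)%R.
by exists m => i /hm /fK; rewrite subrK.
Qed.

Lemma tends0_shift a : tends0 a -> tends0 (fun i => a i.+1).
Proof. by move=> a0 N; have [m hm] := a0 N; exists m => i /leqW /hm. Qed.

(** * The filtration [f_u] on series *)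

Definition wt (k : nat) : rat := (k%:R / 2%:R)%R.

Lemma wt0 : wt 0 = 0%R.
Proof. by rewrite /wt mul0r. Qed.

Lemma wtS k : wt k.+1 = (wt k + 1 / 2%:R)%R.
Proof. by rewrite /wt -addn1 natrD mulrDl. Qed.

Definition inFs (A : rat) (g : ser R) := forall k, inF (A - wt k) (g k).

Definition Rb (g : ser R) :=
  forall N, exists n0, forall n, (n0 <= n)%N -> inF (N - wt n) (g n).

Lemma in_RbE g : in_Rb u g <-> Rb g.
Proof.
split=> gRb N; have [n0 hn0] := gRb N; exists n0 => n /hn0.
  by rewrite /inF EFinB leeBlDr.
by rewrite /inF EFinB leeBlDr.
Qed.

Lemma f_u_lbound g i : f_u u g <= u (g i) + (wt i)%:E.
Proof.
apply: ereal_inf_halfint_lbound; last by exists i.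
move=> _ [k _ <-]; case: (u_int (g k)) => [->|[z ->]]; [by left|right].
by exists (2 * z + k%:Z)%R; rewrite -EFinD rmorphD rmorphM /=; congr (_%:E); field.
Qed.

Lemma f_u_geP A g : A%:E <= f_u u g <-> inFs A g.
Proof.
split=> [Ag k|Ag].
  by rewrite /inF EFinB leeBlDr // (le_trans Ag (f_u_lbound g k)).
by apply: le_ereal_inf_tmp => _ [k _ <-]; rewrite -leeBlDr // -EFinB; exact: Ag.
Qed.

Lemma inFs_le A B g : (B <= A)%R -> inFs A g -> inFs B g.
Proof. by move=> leBA Ag k; apply: inF_le (Ag k); rewrite lerD2r. Qed.

Lemma inFs0 A : inFs A (szero R).
Proof. by move=> k; exact: inF0. Qed.

Lemma inFsD A f g : inFs A f -> inFs A g -> inFs A (sadd f g).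
Proof. by move=> Af Ag k; exact: inFD. Qed.

Lemma inFs_eq0 g : (forall A, inFs A g) -> g = szero R.
Proof.
move=> Ag; apply/funext => k; apply: inF_eq0 => N.
by have := Ag (N + wt k)%R k; rewrite addrK.
Qed.

Lemma inFs_lipschitz f : lipschitz f ->
  exists K, forall A g, inFs A g -> inFs (A + K) (fun k => f (g k)).
Proof.
by move=> [K fK]; exists K => A g Ag k; have := fK _ _ (Ag k); rewrite addrAC.
Qed.

Lemma Rb_inFs g : Rb g -> exists A, inFs A g.
Proof.
move=> gRb; have [n0 hn0] := gRb 0%R.
suff [A hA] : exists A, forall k, (k < n0)%N -> inF (A - wt k) (g k).
  exists (Num.min A 0)%R => k; have [kn0|n0k] := ltnP k n0.
    by apply: inF_le (hA k kn0); rewrite lerD2r ge_min lexx.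
  by apply: inF_le (hn0 k n0k); rewrite lerD2r ge_min lexx orbT.
elim: n0 {hn0} => [|n [A hA]]; first by exists 0%R.
case: (u_int (g n)) => [ug|[z uz]].
  exists A => k; rewrite ltnS leq_eqVlt => /orP[/eqP ->|]; last exact: hA.
  by rewrite /inF ug leey.
exists (Num.min A (z%:~R + wt n))%R => k.
rewrite ltnS leq_eqVlt => /orP[/eqP ->|kn].
  by rewrite /inF uz lee_fin lerBlDr ge_min lexx orbT.
by apply: inF_le (hA k kn); rewrite lerD2r ge_min lexx.
Qed.

Lemma Rb_lipschitz f : lipschitz f -> forall g, Rb g -> Rb (fun n => f (g n)).
Proof.
move=> [K fK] g gRb N; have [n0 hn0] := gRb (N - K)%R.
by exists n0 => n /hn0 /fK; rewrite addrAC subrK.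
Qed.

Lemma RbD f g : Rb f -> Rb g -> Rb (sadd f g).
Proof.
move=> fRb gRb N; have [n1 h1] := fRb N; have [n2 h2] := gRb N.
exists (maxn n1 n2) => n; rewrite geq_max => /andP[n1n n2n].
by apply: inFD; [exact: h1|exact: h2].
Qed.

Lemma RbN g : Rb g -> Rb (sopp g).
Proof. exact: Rb_lipschitz lipschitz_opp g. Qed.

Lemma RbB f g : Rb f -> Rb g -> Rb (ssub f g).
Proof. by move=> fRb /RbN; exact: RbD. Qed.

Lemma Rb_scal a g : Rb g -> Rb (sscal a g).
Proof. exact: Rb_lipschitz (lipschitz_mull a) g. Qed.

Lemma Rb_fin g n0 : (forall n, (n0 <= n)%N -> g n = 0%R) -> Rb g.
Proof. by move=> g0 N; exists n0 => n /g0 ->; exact: inF0. Qed.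

Lemma Rb0 : Rb (szero R).
Proof. exact: (@Rb_fin _ 0). Qed.

Lemma Rb_smono i a : Rb (smono i a).
Proof. by apply: (@Rb_fin _ i.+1) => n ni; rewrite /smono gtn_eqF. Qed.

Lemma Rb_strunc n r : Rb (strunc n r).
Proof. by apply: (@Rb_fin _ n) => k nk; rewrite /strunc ltnNge nk. Qed.

Lemma smono0 n : smono n (0%R : R) = szero R.
Proof. by apply/funext => m; rewrite /smono /szero; case: ifP. Qed.

Lemma sadd0 (g : ser R) : sadd g (szero R) = g.
Proof. by apply/funext => m; rewrite /sadd /szero addr0. Qed.

Lemma sscal0 (g : ser R) : sscal 0%R g = szero R.
Proof. by apply/funext => m; rewrite /sscal /szero mul0r. Qed.

Lemma sscal1 (g : ser R) : sscal 1%R g = g.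
Proof. by apply/funext => k; rewrite /sscal mul1r. Qed.

Lemma ssubK (g h : ser R) : sadd (ssub g h) h = g.
Proof. by apply/funext => k; rewrite /sadd /ssub subrK. Qed.

Lemma sopp_scal (g : ser R) : sopp g = sscal (-1)%R g.
Proof. by apply/funext => k; rewrite /sopp /sscal mulN1r. Qed.

Lemma sscal_smono1 (b : R) n : sscal b (smono n 1%R) = smono n b.
Proof. by apply/funext => k; rewrite /sscal /smono; case: ifP; rewrite ?mulr1 ?mulr0. Qed.

Lemma strunc0 (r : nat -> R) : strunc 0 r = szero R.
Proof. by apply/funext => k; rewrite /strunc /szero. Qed.

Lemma struncS n (r : nat -> R) : strunc n.+1 r = sadd (strunc n r) (smono n (r n)).
Proof.
apply/funext => k; rewrite /strunc /sadd /smono ltnS leq_eqVlt.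
by have [->|kn] /= := eqVneq k n; rewrite ?ltnn ?add0r //; case: ifP; rewrite addr0.
Qed.

Definition scvg (s : nat -> ser R) (l : ser R) :=
  forall T, exists m, forall n, (m <= n)%N -> inFs T (ssub (s n) l).

Lemma scvg_uniq s l1 l2 : scvg s l1 -> scvg s l2 -> l1 = l2.
Proof.
have coef l k : scvg s l -> converges_to (fun a b => (a - b)%R) u (s^~ k) (l k).
  by move=> sl N; have [m hm] := sl (N + wt k)%R; exists m => n /hm /(_ k); rewrite addrK.
by move=> sl1 sl2; apply/funext => k; exact: cvgR_uniq (coef _ k sl1) (coef _ k sl2).
Qed.

Lemma scvg_const g : scvg (fun _ => g) g.
Proof.
move=> T; exists 0%N => n _ k; rewrite /ssub subrr; exact: inF0.
Qed.

Lemma scvg_sym s l : (forall T, exists m, forall n, (m <= n)%N -> inFs T (ssub l (s n))) ->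
  scvg s l.
Proof.
have [K oppK] := inFs_lipschitz lipschitz_opp => ls T.
have [m hm] := ls (T - K)%R; exists m => n /hm /oppK; rewrite subrK.
by congr inFs; apply/funext => k; rewrite /ssub opprB.
Qed.

Lemma scvg_strunc h : Rb h -> scvg (fun n => strunc n h) h.
Proof.
move=> hRb; apply: scvg_sym => T; have [n0 hn0] := hRb T.
exists n0 => n n0n k; rewrite /ssub /strunc.
case: ifPn => [_|]; first by rewrite subrr; exact: inF0.
by rewrite -leqNgt subr0 => /(leq_trans n0n)/hn0.
Qed.

Lemma f_u_szero : f_u u (szero R) = +oo.
Proof.
apply/eqP; rewrite eq_le leey /=.
by apply: le_ereal_inf_tmp => _ [k _ <-]; rewrite /szero u0.
Qed.

Lemma f_u_ge X g : (forall A : rat, A%:E <= X -> inFs A g) -> X <= f_u u g.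
Proof.
case: X => [r||] Xg; last by rewrite leNye.
  exact/f_u_geP/Xg.
by rewrite (inFs_eq0 (fun A => Xg A (leey _))) f_u_szero.
Qed.

Lemma f_u_sadd f g : Order.min (f_u u f) (f_u u g) <= f_u u (sadd f g).
Proof.
apply: f_u_ge => A; rewrite le_min => /andP[/f_u_geP Af /f_u_geP Ag].
exact: inFsD.
Qed.

Lemma f_u_sconst a : f_u u (sconst a) = u a.
Proof.
have wt0E : ((0%:R : rat) / 2%:R)%R = 0%R by rewrite mul0r.
apply: ereal_inf_attained; first by exists 0%N => //; rewrite /sconst /smono /= wt0E adde0.
move=> _ [[|i] _ <-]; rewrite /sconst /smono /=; first by rewrite wt0E adde0.
by rewrite u0 leey.
Qed.

Lemma f_u_attained g : Rb g -> g <> szero R ->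
  exists2 i, g i != 0%R & f_u u g = u (g i) + (wt i)%:E.
Proof.
move=> gRb g_neq0; pose v k := u (g k) + (wt k)%:E.
have [[i1 gi1]|g0] := pselect (exists i, g i != 0%R); last first.
  by case: g_neq0; apply/funext => k; apply/eqP; apply: contraT => gk; case: g0; exists k.
have [z uz] := u_int_neq0 gi1.
have [n0 hn0] := gRb (z%:~R + wt i1 + 1)%R.
have i1n : (i1 < maxn n0 i1.+1)%N by rewrite leq_max ltnSn orbT.
case: (@arg_minP _ _ _ (Ordinal i1n) xpredT (fun k => v k) isT) => i0 _ i0min.
have v_i0 : v i0 <= v i1 by exact: i0min (Ordinal i1n) isT.
have v_tail k : (maxn n0 i1.+1 <= k)%N -> v i1 <= v k.
  rewrite geq_max => /andP[/hn0 + _]; rewrite /inF /v uz EFinB leeBlDr // => le_k.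
  by apply: le_trans le_k; rewrite -EFinD lee_fin lerDl.
exists i0.
  by apply: contraTneq v_i0; rewrite /v => ->; rewrite u0 uz.
apply: ereal_inf_attained; first by exists i0.
move=> _ [k _ <-]; have [kn|nk] := ltnP k (maxn n0 i1.+1).
  exact: i0min (Ordinal kn) isT.
exact: le_trans v_i0 (v_tail k nk).
Qed.

Lemma f_u_halfint g : Rb g ->
  f_u u g = +oo \/ exists z : int, f_u u g = ((z%:~R : rat) / 2%:R)%:E.
Proof.
move=> gRb; have [->|g0] := pselect (g = szero R); first by left; exact: f_u_szero.
have [i /u_int_neq0[z uz] ->] := f_u_attained gRb g0; right.
exists (2 * z + i%:Z)%R; rewrite uz -EFinD; congr (_%:E).
by rewrite /wt rmorphD rmorphM /=; field.
Qed.

Lemma f_u_split A f g : Rb f -> Rb g -> A%:E <= f_u u f + f_u u g ->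
  exists a, a%:E <= f_u u f /\ (A - a)%:E <= f_u u g.
Proof.
move=> /f_u_halfint[->|[r ->]] /f_u_halfint[->|[s ->]] A_fg.
- by exists A; rewrite !leey.
- by exists (A - s%:~R / 2%:R)%R; rewrite leey opprB addrC subrK lexx.
- by exists (r%:~R / 2%:R)%R; rewrite lexx leey.
exists (r%:~R / 2%:R)%R; rewrite lexx; split => //.
by move: A_fg; rewrite -EFinD !lee_fin lerBlDl.
Qed.

Lemma inF_halfint_gt (m : int) i x : ((m%:~R / 2%:R - wt i)%:E < u x) ->
  inF (m%:~R / 2%:R + 1 / 2%:R - wt i) x.
Proof.
rewrite /inF; case: (u_int x) => [->|[z ->]]; first by rewrite leey.
rewrite lte_fin lee_fin /wt => lt_mz.
have lt_k : (((m - i%:Z)%:~R : rat) / 2%:R < z%:~R)%R.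
  by rewrite intrB -[((i%:Z)%:~R : rat)]/(i%:R); lra.
by move: (half_lt_int lt_k); rewrite intrB -[((i%:Z)%:~R : rat)]/(i%:R); lra.
Qed.

Lemma f_u_gr_iso (mul : ser R -> ser R -> ser R) : gr_iso u mul.
Proof.
move=> m lam; split; [|split].
- move=> n r r_lam; apply/f_u_geP => k; rewrite /strunc.
  by case: ifP => [/r_lam|_]; [|exact: inF0].
- move=> n r r_lam; split=> [lt_lam i ni|gt_r].
    rewrite EFinB lteBlDr //; apply: lt_le_trans lt_lam _.
    by have := f_u_lbound (strunc n r) i; rewrite /strunc ni.
  apply: (@lt_le_trans _ _ (lam + 1 / 2%:R)%R%:E); first by rewrite lte_fin; lra.
  apply/f_u_geP => k; rewrite /strunc; case: ifP => [kn|_]; last exact: inF0.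
  exact: inF_halfint_gt (gt_r k kn).
move=> f /in_RbE fRb /f_u_geP lam_f; have [n0 hn0] := fRb (lam + 1 / 2%:R)%R.
exists n0, f; split=> [i _|]; first exact: lam_f.
apply: (@lt_le_trans _ _ (lam + 1 / 2%:R)%R%:E); first by rewrite lte_fin; lra.
apply/f_u_geP => k; rewrite /ssub /strunc.
case: ifPn => [_|]; first by rewrite subrr; exact: inF0.
by rewrite subr0 -leqNgt => /hn0.
Qed.

(** * Sums in a complete filtered ring *)

Section Complete.
Hypothesis u_comp : complete_on (fun _ => True) (fun a b => (a - b)%R) u.

Definition psum (a : nat -> R) n := (\sum_(0 <= i < n) a i)%R.

Lemma psumB a j i : (j <= i)%N -> (psum a i - psum a j = \sum_(j <= k < i) a k)%R.
Proof. by move=> ji; rewrite /psum (@big_cat_nat _ _ _ j) //= addrAC subrr add0r. Qed.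

Lemma cauchy_psum a : tends0 a -> cauchy_seq (fun a b => (a - b)%R) u (psum a).
Proof.
move=> a0 N; have [K oppK] := lipschitz_opp.
have [m hm] := a0 (Num.max N (N - K))%R.
exists m => i j mi mj; have [ji|/ltnW ij] := leqP j i.
  rewrite psumB //; apply: inF_sum => k /andP[jk _].
  by apply: inF_le (hm k (leq_trans mj jk)); rewrite le_max lexx.
rewrite -opprB -[N](subrK K); apply: oppK; rewrite psumB //.
apply: inF_sum => k /andP[ik _].
by apply: inF_le (hm k (leq_trans mi ik)); rewrite le_max lexx orbT.
Qed.

Definition rsum (a : nat -> R) : R := xget 0%R (cvgR (psum a)).

Lemma rsumP a : tends0 a -> cvgR (psum a) (rsum a).
Proof.
move=> /cauchy_psum/(u_comp (fun _ => I))[l [_ al]].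
by apply: xgetPex; exists l.
Qed.

Lemma rsum_inF a B : tends0 a -> (forall i, inF B (a i)) -> inF B (rsum a).
Proof.
move=> a0 Ba; apply: (cvgR_closed (m0 := 0%N) (rsumP a0)) => i _.
by apply: inF_sum => k _; exact: Ba.
Qed.

Lemma rsum_tail a B n : tends0 a -> (forall i, (n <= i)%N -> inF B (a i)) ->
  inF B (rsum a - psum a n)%R.
Proof.
move=> a0 Ba.
have tail : cvgR (fun j => psum a j - psum a n)%R (rsum a - psum a n)%R.
  by move=> N; have [m hm] := rsumP a0 N; exists m => i /hm; rewrite opprB addrA subrK.
apply: (cvgR_closed (m0 := n) tail) => i ni.
by rewrite psumB //; apply: inF_sum => k /andP[/Ba].
Qed.

Lemma rsumD a b : tends0 a -> tends0 b ->
  rsum (fun i => a i + b i)%R = (rsum a + rsum b)%R.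
Proof.
move=> a0 b0; apply: (cvgR_uniq (rsumP (tends0D a0 b0))) => N.
have [m1 h1] := rsumP a0 N; have [m2 h2] := rsumP b0 N.
exists (maxn m1 m2) => i; rewrite geq_max => /andP[i1 i2].
by rewrite /psum big_split /= opprD addrACA; apply: inFD; [exact: h1|exact: h2].
Qed.

Lemma rsum_lipschitz f a : (forall x y, f (x + y) = f x + f y)%R -> lipschitz f ->
  tends0 a -> f (rsum a) = rsum (fun i => f (a i)).
Proof.
move=> fD fK a0; apply: (cvgR_uniq _ (rsumP (tends0_lipschitz fK a0))).
move=> N; have [K hK] := fK; have [m hm] := rsumP a0 (N - K)%R.
by exists m => i /hm /hK; rewrite subrK /psum -(additive_sum fD) -(additiveB fD).
Qed.

Lemma rsum_fin a n : (forall i, (n <= i)%N -> a i = 0%R) -> rsum a = psum a n.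
Proof.
move=> a_fin.
have a0 : tends0 a by move=> N; exists n => i /a_fin ->; exact: inF0.
apply: (cvgR_uniq (rsumP a0)) => N; exists n => i ni.
rewrite psumB // big_nat_cond big1; first exact: inF0.
by move=> k /andP[/andP[/a_fin]].
Qed.

Lemma rsum_single a i : (forall j, j != i -> a j = 0%R) -> rsum a = a i.
Proof.
move=> a0; rewrite (@rsum_fin _ i.+1) => [|j ij]; last by rewrite a0 // gtn_eqF.
rewrite /psum big_nat_recr //= big_nat_cond big1 ?add0r // => j /andP[/andP[_ ji] _].
by rewrite a0 // ltn_eqF.
Qed.

Lemma rsum_shift a : a 0%N = 0%R -> tends0 a -> rsum a = rsum (fun i => a i.+1).
Proof.
move=> a0 a_0; apply: (cvgR_uniq (rsumP a_0)) => N.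
have [m hm] := rsumP (tends0_shift a_0) N.
exists m.+1 => -[//|i] /hm; congr inF; congr (_ - _)%R.
by rewrite /psum big_nat_recl // a0 add0r.
Qed.

Definition vanishing (F : nat -> ser R) :=
  forall N, exists m, forall i, (m <= i)%N -> inFs N (F i).

Definition ssum (F : nat -> ser R) : ser R := fun k => rsum (fun i => F i k).

Definition spsum (F : nat -> ser R) n : ser R := fun k => psum (fun i => F i k) n.

Lemma vanishing_tends0 F k : vanishing F -> tends0 (fun i => F i k).
Proof.
by move=> F0 N; have [m hm] := F0 (N + wt k)%R; exists m => i /hm /(_ k); rewrite addrK.
Qed.

Lemma ssum_inFs A F : vanishing F -> (forall i, inFs A (F i)) -> inFs A (ssum F).
Proof. by move=> F0 AF k; apply: rsum_inF => [|i]; [exact: vanishing_tends0|exact: AF]. Qed.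

Lemma scvg_ssum F : vanishing F -> scvg (spsum F) (ssum F).
Proof.
move=> F0; apply: scvg_sym => T; have [m hm] := F0 T; exists m => n mn k.
apply: rsum_tail; first exact: vanishing_tends0.
by move=> i /(leq_trans mn)/hm.
Qed.

Lemma ssumD F G : vanishing F -> vanishing G ->
  ssum (fun i => sadd (F i) (G i)) = sadd (ssum F) (ssum G).
Proof. by move=> F0 G0; apply/funext => k; apply: rsumD; exact: vanishing_tends0. Qed.

Lemma ssum_scal a F : vanishing F -> sscal a (ssum F) = ssum (fun i => sscal a (F i)).
Proof.
move=> F0; apply/funext => k; apply: rsum_lipschitz; last exact: vanishing_tends0.
  by move=> x y; rewrite mulrDr.
exact: lipschitz_mull.
Qed.

Lemma spsum0 F : spsum F 0 = szero R.
Proof. by apply/funext => k; rewrite /spsum /psum big_geq. Qed.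

Lemma spsumS F n : spsum F n.+1 = sadd (spsum F n) (F n).
Proof. by apply/funext => k; rewrite /spsum /psum big_nat_recr. Qed.

Lemma ssum_single F i : (forall j, j != i -> F j = szero R) -> ssum F = F i.
Proof. by move=> F0; apply/funext => k; apply: rsum_single => j /F0 ->. Qed.

Lemma ssum_shift F : F 0%N = szero R -> vanishing F -> ssum F = ssum (fun i => F i.+1).
Proof.
by move=> F00 F0; apply/funext => k; apply: rsum_shift; [rewrite F00|exact: vanishing_tends0].
Qed.

Lemma Rb_complete : complete_on (in_Rb u) (@ssub R) (f_u u).
Proof.
move=> s sRb s_cauchy.
have coef_cauchy k : cauchy_seq (fun a b => (a - b)%R) u (fun i => s i k).
  move=> N; have [m hm] := s_cauchy (N + wt k)%R; exists m => i j mi mj.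
  by have /f_u_geP/(_ k) := hm i j mi mj; rewrite addrK.
pose a k := xget 0%R (cvgR (fun i => s i k)).
have s_a k : cvgR (fun i => s i k) (a k).
  by have [l [_ sl]] := u_comp (fun _ => I) (coef_cauchy k); apply: xgetPex; exists l.
have s_to_a : scvg s a.
  move=> N; have [m hm] := s_cauchy N; exists m => i mi k.
  have [mk hmk] := s_a k (N - wt k)%R; set j := maxn m mk; rewrite /ssub.
  have -> : (s i k - a k = (s i k - s j k) + (s j k - a k))%R by rewrite addrA subrK.
  apply: inFD; last by apply: hmk; rewrite leq_maxr.
  by move/f_u_geP: (hm i j mi (leq_maxl _ _)); apply.
exists a; split; last by move=> N; have [m hm] := s_to_a N; exists m => i /hm /f_u_geP.
apply/in_RbE => N; have [K oppK] := lipschitz_opp.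
have [m hm] := s_to_a (N - K)%R; have /in_RbE/(_ N) [n0 hn0] := sRb m.
exists n0 => n n0n; have -> : a n = (s m n + - (s m n - a n))%R by rewrite opprB addrC subrK.
apply: inFD; first exact: hn0.
by have := oppK _ _ (hm m (leqnn m) n); rewrite addrAC subrK.
Qed.

(** * The skew multiplication *)

Section SkewDerivation.
Variables sigma delta : R -> R.
Hypotheses (sd : skew_derivation sigma delta) (cmp : compatible u sigma delta).

Lemma sigmaD a b : sigma (a + b)%R = (sigma a + sigma b)%R.
Proof. by case: sd => -[]. Qed.

Lemma sigmaM a b : sigma (a * b)%R = (sigma a * sigma b)%R.
Proof. by case: sd => -[_ []]. Qed.

Lemma sigma1 : sigma 1%R = 1%R.
Proof. by case: sd => -[_ [_ []]]. Qed.

Lemma deltaD a b : delta (a + b)%R = (delta a + delta b)%R.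
Proof. by case: sd => _ []. Qed.

Lemma deltaM a b : delta (a * b)%R = (delta a * b + sigma a * delta b)%R.
Proof. by case: sd => _ []. Qed.

Lemma sigma0 : sigma 0%R = 0%R. Proof. exact: additive0 sigmaD. Qed.

Lemma delta0 : delta 0%R = 0%R. Proof. exact: additive0 deltaD. Qed.

Lemma delta1 : delta 1%R = 0%R.
Proof.
have := deltaM 1 1; rewrite mul1r mulr1 sigma1 mul1r => dd.
by apply: (@addrI _ (delta 1%R)); rewrite addr0 -{1}dd.
Qed.

Lemma inF_delta N y : inF N y -> inF (N + 1) (delta y).
Proof. exact: inF_deg_u delta0 (proj2 cmp) N y. Qed.

Lemma inF_sigmaB N y : inF N y -> inF (N + 1) (sigma y - y)%R.
Proof.
by apply: (@inF_deg_u (fun a => sigma a - a)%R _ (proj1 cmp)); rewrite sigma0 subr0.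
Qed.

Lemma inF_sigma N y : inF N y -> inF N (sigma y).
Proof.
move=> Ny; rewrite -[sigma y](subrK y); apply: inFD => //.
by apply: inF_le (inF_sigmaB Ny); rewrite lerDl.
Qed.

Lemma lipschitz_sigma : lipschitz sigma.
Proof. by exists 0%R => N y /inF_sigma; rewrite addr0. Qed.

Lemma lipschitz_delta : lipschitz delta.
Proof. by exists 0%R => N y /inF_delta; apply: inF_le; rewrite addr0 lerDl. Qed.

(* [xmul g] is [x * g], from [x (g_m x^m) = sigma (g_m) x^(m+1) + delta (g_m) x^m]. *)
Definition xmul (g : ser R) : ser R :=
  fun m => ((if m is m'.+1 then sigma (g m') else 0) + delta (g m))%R.

Lemma xmul_tail B n0 g : (forall k, (n0 <= k)%N -> inF (B - wt k) (g k)) ->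
  forall k, (n0 < k)%N -> inF (B + 1 / 2%:R - wt k) (xmul g k).
Proof.
move=> Bg [//|k] n0k; apply: inFD.
  by apply: inF_le (inF_sigma (Bg k n0k)); rewrite wtS; lra.
by apply: inF_le (inF_delta (Bg k.+1 (ltnW n0k))); rewrite wtS; lra.
Qed.

Lemma inFs_xmul A g : inFs A g -> inFs (A + 1 / 2%:R) (xmul g).
Proof.
move=> Ag [|k]; last by apply: (@xmul_tail _ 0) => // i _; exact: Ag.
by rewrite /xmul add0r; apply: inF_le (inF_delta (Ag 0%N)); rewrite wt0; lra.
Qed.

Lemma inFs_xmulX A g i : inFs A g -> inFs (A + wt i) (iter i xmul g).
Proof.
elim: i => [|i IH] Ag /=; first by rewrite wt0 addr0.
by rewrite wtS addrA; exact/inFs_xmul/IH.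
Qed.

Lemma xmulX_tail B n0 g i : (forall k, (n0 <= k)%N -> inF (B - wt k) (g k)) ->
  forall k, (n0 + i <= k)%N -> inF (B + wt i - wt k) (iter i xmul g k).
Proof.
elim: i => [|i IH] Bg /=; first by move=> k; rewrite addn0 wt0 addr0; exact: Bg.
by move=> k; rewrite addnS wtS addrA; apply: xmul_tail (IH Bg) k.
Qed.

Lemma Rb_xmul g : Rb g -> Rb (xmul g).
Proof.
move=> gRb N; have [n0 hn0] := gRb (N - 1 / 2%:R)%R.
by exists n0.+1 => n n0n; have := xmul_tail hn0 n0n; rewrite subrK.
Qed.

Lemma Rb_xmulX g i : Rb g -> Rb (iter i xmul g).
Proof. by elim: i => [|i IH] //= gRb; exact/Rb_xmul/IH. Qed.

Lemma Rb_sigma_shift g : Rb g -> Rb (fun n => if n is n'.+1 then sigma (g n') else 0%R).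
Proof.
move=> gRb N; have [n0 hn0] := Rb_lipschitz lipschitz_sigma gRb (N - 1 / 2%:R)%R.
by exists n0.+1 => -[//|n] /hn0; apply: inF_le; rewrite wtS; lra.
Qed.

Lemma xmulD g h : xmul (sadd g h) = sadd (xmul g) (xmul h).
Proof.
apply/funext => -[|m]; rewrite /xmul /sadd deltaD; first by rewrite !add0r.
by rewrite sigmaD addrACA.
Qed.

Lemma xmulXD i g h : iter i xmul (sadd g h) = sadd (iter i xmul g) (iter i xmul h).
Proof. by elim: i => [|i IH] //=; rewrite IH xmulD. Qed.

Lemma xmul_scal a g :
  xmul (sscal a g) = sadd (sscal (sigma a) (xmul g)) (sscal (delta a) g).
Proof.
apply/funext => -[|m]; rewrite /xmul /sadd /sscal.
  by rewrite !add0r deltaM addrC.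
by rewrite sigmaM deltaM mulrDr -!addrA [(delta a * _ + _)%R]addrC.
Qed.

Lemma xmul_smono n b : xmul (smono n b) = sadd (smono n.+1 (sigma b)) (smono n (delta b)).
Proof.
apply/funext => -[|m]; rewrite /xmul /sadd /smono.
  by case: n => [|n] /=; rewrite ?add0r ?delta0.
rewrite eqSS; have [->|mn] := eqVneq m n; first by rewrite gtn_eqF // delta0 !addr0.
by rewrite sigma0; case: eqP => _; rewrite ?delta0 !add0r.
Qed.

Lemma xmulX_sone i : iter i xmul (sone R) = smono i (1%R : R).
Proof. by elim: i => [|i IH] //=; rewrite IH xmul_smono sigma1 delta1 smono0 sadd0. Qed.

Lemma xmulB g h : xmul (ssub g h) = ssub (xmul g) (xmul h).
Proof.
have xmulN k : xmul (sopp k) = sopp (xmul k).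
  rewrite !sopp_scal xmul_scal (additiveN sigmaD) sigma1 (additiveN deltaD) delta1.
  by rewrite oppr0 sscal0 sadd0.
by rewrite -[ssub g h]/(sadd g (sopp h)) xmulD xmulN.
Qed.

Lemma ssum_xmul F : vanishing F -> xmul (ssum F) = ssum (fun i => xmul (F i)).
Proof.
move=> F0; have tF k := vanishing_tends0 k F0.
apply/funext => -[|k]; rewrite /ssum /xmul.
  rewrite add0r (rsum_lipschitz deltaD lipschitz_delta (tF 0%N)).
  by congr rsum; apply/funext => i; rewrite add0r.
rewrite (rsum_lipschitz sigmaD lipschitz_sigma (tF k)).
rewrite (rsum_lipschitz deltaD lipschitz_delta (tF k.+1)) rsumD //.
  exact: tends0_lipschitz lipschitz_sigma (tF k).
exact: tends0_lipschitz lipschitz_delta (tF k.+1).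
Qed.

Lemma scvg_xmul s l : scvg s l -> scvg (fun n => xmul (s n)) (xmul l).
Proof.
move=> sl T; have [m hm] := sl (T - 1 / 2%:R)%R.
by exists m => n /hm /inFs_xmul; rewrite subrK xmulB.
Qed.

Definition smul (f g : ser R) : ser R := ssum (fun i => sscal (f i) (iter i xmul g)).

Lemma inFs_term C B a i h : inF (C - wt i) a -> inFs B h ->
  inFs (C + B) (sscal a (iter i xmul h)).
Proof.
move=> Ca Bh k; have := inFM Ca (inFs_xmulX i Bh k).
by apply: inF_le; lra.
Qed.

Lemma vanishing_smul f h B : Rb f -> inFs B h ->
  vanishing (fun i => sscal (f i) (iter i xmul h)).
Proof.
move=> fRb Bh N; have [n0 hn0] := fRb (N - B)%R.
by exists n0 => i /hn0 /inFs_term /(_ Bh); rewrite subrK.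
Qed.

Lemma inFs_smul A B f h : Rb f -> inFs A f -> inFs B h -> inFs (A + B) (smul f h).
Proof.
move=> fRb Af Bh; apply: ssum_inFs; first exact: vanishing_smul fRb Bh.
by move=> i; exact: inFs_term (Af i) Bh.
Qed.

Lemma Rb_smul f g : Rb f -> Rb g -> Rb (smul f g).
Proof.
move=> fRb gRb T; have [Af Af_f] := Rb_inFs fRb; have [Ag Ag_g] := Rb_inFs gRb.
have [n1 hn1] := fRb (T - Ag)%R; have [n2 hn2] := gRb (T - Af)%R.
exists (n1 + n2)%N => n n12n.
apply: rsum_inF => [|i]; first exact: vanishing_tends0 (vanishing_smul fRb Ag_g).
(* Either [f_i] is small, or [i < n1] and coefficient [n] of [x^i g] only
   involves the tail of [g]. *)
have [n1i|in1] := leqP n1 i.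
  by apply: inF_le (inFM (hn1 i n1i) (inFs_xmulX i Ag_g n)); lra.
have n2i : (n2 + i <= n)%N by lia.
by apply: inF_le (inFM (Af_f i) (xmulX_tail hn2 n2i)); lra.
Qed.

Lemma smulDl f1 f2 h : Rb f1 -> Rb f2 -> Rb h ->
  smul (sadd f1 f2) h = sadd (smul f1 h) (smul f2 h).
Proof.
move=> f1Rb f2Rb /Rb_inFs[B Bh].
rewrite /smul -ssumD; try exact: vanishing_smul Bh.
by congr ssum; apply/funext => i; apply/funext => k; rewrite /sscal /sadd mulrDl.
Qed.

Lemma smulDr f g h : Rb f -> Rb g -> Rb h ->
  smul f (sadd g h) = sadd (smul f g) (smul f h).
Proof.
move=> fRb /Rb_inFs[Bg Bg_g] /Rb_inFs[Bh Bh_h].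
rewrite /smul -ssumD; try exact: vanishing_smul.
congr ssum; apply/funext => i; rewrite xmulXD.
by apply/funext => k; rewrite /sscal /sadd mulrDr.
Qed.

Lemma smul_smono i a h : smul (smono i a) h = sscal a (iter i xmul h).
Proof.
rewrite /smul (@ssum_single _ i) => [|j ji]; first by rewrite /smono eqxx.
by rewrite /smono (negbTE ji) sscal0.
Qed.

Lemma smul0l h : smul (szero R) h = szero R.
Proof. by rewrite -{1}(smono0 0%N) smul_smono sscal0. Qed.

Lemma smul_scal a g h : Rb g -> Rb h -> sscal a (smul g h) = smul (sscal a g) h.
Proof.
move=> gRb /Rb_inFs[B Bh]; rewrite /smul ssum_scal; last exact: vanishing_smul Bh.
by congr ssum; apply/funext => i; apply/funext => k; rewrite /sscal mulrA.
Qed.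

Lemma smulBl f g h : Rb f -> Rb g -> Rb h ->
  smul (ssub f g) h = ssub (smul f h) (smul g h).
Proof.
move=> fRb gRb hRb; have gNRb := RbN gRb.
by rewrite -[ssub f g]/(sadd f (sopp g)) smulDl // [sopp g]sopp_scal -smul_scal // -sopp_scal.
Qed.

Lemma smul_xmul g h : Rb g -> Rb h -> xmul (smul g h) = smul (xmul g) h.
Proof.
move=> gRb /Rb_inFs[B Bh]; rewrite /smul (ssum_xmul (vanishing_smul gRb Bh)).
(* [x (g_i x^i h) = sigma (g_i) x^(i+1) h + delta (g_i) x^i h], and the
   [sigma]-part of [x g] is the shift of [sigma \o g]. *)
pose G1 i := sscal (sigma (g i)) (iter i.+1 xmul h).
pose G2 i := sscal (delta (g i)) (iter i xmul h).
pose H1 i := sscal (if i is i'.+1 then sigma (g i') else 0%R) (iter i xmul h).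
have G1_0 : vanishing G1.
  rewrite (_ : G1 = fun i => sscal (sigma (g i)) (iter i xmul (xmul h))).
    exact: vanishing_smul (Rb_lipschitz lipschitz_sigma gRb) (inFs_xmul Bh).
  by apply/funext => i; rewrite /G1 iterSr.
have G2_0 : vanishing G2 := vanishing_smul (Rb_lipschitz lipschitz_delta gRb) Bh.
have H1_0 : vanishing H1 := vanishing_smul (Rb_sigma_shift gRb) Bh.
rewrite (_ : (fun i => xmul _) = fun i => sadd (G1 i) (G2 i)); last first.
  by apply/funext => i; rewrite xmul_scal.
rewrite (_ : (fun i => sscal _ _) = fun i => sadd (H1 i) (G2 i)); last first.
  by apply/funext => i; apply/funext => k; rewrite /sscal /sadd /H1 /G2 /xmul mulrDl.
by rewrite !ssumD // (ssum_shift _ H1_0) // /H1 sscal0.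
Qed.

Lemma smul_xmulX i g h : Rb g -> Rb h -> iter i xmul (smul g h) = smul (iter i xmul g) h.
Proof.
by move=> gRb hRb; elim: i => [|i IH] //=; rewrite IH smul_xmul //; exact: Rb_xmulX.
Qed.

Lemma Rb_spsum F n : (forall i, Rb (F i)) -> Rb (spsum F n).
Proof.
by move=> FRb; elim: n => [|n IH]; rewrite ?spsum0 ?spsumS; [exact: Rb0|exact: RbD].
Qed.

Lemma spsum_smul F h n : (forall i, Rb (F i)) -> Rb h ->
  smul (spsum F n) h = spsum (fun i => smul (F i) h) n.
Proof.
move=> FRb hRb; elim: n => [|n IH]; first by rewrite !spsum0 smul0l.
by rewrite !spsumS smulDl ?IH //; exact: Rb_spsum.
Qed.

Lemma scvg_smull s f h : (forall n, Rb (s n)) -> Rb f -> Rb h -> scvg s f ->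
  scvg (fun n => smul (s n) h) (smul f h).
Proof.
move=> sRb fRb hRb sf T; have [B Bh] := Rb_inFs hRb; have [m hm] := sf (T - B)%R.
exists m => n /hm sfn; rewrite -smulBl //; rewrite -[T](subrK B).
exact: inFs_smul (RbB (sRb n) fRb) sfn Bh.
Qed.

Lemma smul_ssum F h : vanishing F -> (forall i, Rb (F i)) -> Rb (ssum F) -> Rb h ->
  smul (ssum F) h = ssum (fun i => smul (F i) h).
Proof.
move=> F0 FRb sRb hRb; have [B Bh] := Rb_inFs hRb.
have FhF0 : vanishing (fun i => smul (F i) h).
  move=> N; have [m hm] := F0 (N - B)%R; exists m => i /hm NF.
  by rewrite -[N](subrK B); exact: inFs_smul (FRb i) NF Bh.
apply: (scvg_uniq (s := fun n => smul (spsum F n) h)).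
  exact: scvg_smull (fun n => Rb_spsum n FRb) sRb hRb (scvg_ssum F0).
rewrite (_ : (fun n => _) = spsum (fun i => smul (F i) h)); first exact: scvg_ssum.
by apply/funext => n; exact: spsum_smul.
Qed.

Lemma smulA f g h : Rb f -> Rb g -> Rb h -> smul (smul f g) h = smul f (smul g h).
Proof.
move=> fRb gRb hRb; have [Bg Bg_g] := Rb_inFs gRb.
rewrite [RHS](_ : _ = ssum (fun i => smul (sscal (f i) (iter i xmul g)) h)); last first.
  by congr ssum; apply/funext => i; rewrite smul_xmulX // smul_scal //; exact: Rb_xmulX.
rewrite -smul_ssum //; first exact: vanishing_smul fRb Bg_g.
  by move=> i; exact/Rb_scal/Rb_xmulX.
exact: Rb_smul.
Qed.

Lemma smul_sone f : smul f (sone R) = f.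
Proof.
apply/funext => k; rewrite /smul /ssum (@rsum_single _ k) => [|i ik].
  by rewrite xmulX_sone /sscal /smono eqxx mulr1.
by rewrite xmulX_sone /sscal /smono eq_sym (negbTE ik) mulr0.
Qed.

Lemma sone_smul f : smul (sone R) f = f.
Proof. by rewrite smul_smono sscal1. Qed.

Lemma smul_cont f g : Rb f -> Rb g -> forall N, exists M, forall f' g', Rb f' -> Rb g' ->
  inFs M (ssub f' f) -> inFs M (ssub g' g) -> inFs N (ssub (smul f' g') (smul f g)).
Proof.
move=> fRb gRb N; have [Af Af_f] := Rb_inFs fRb; have [Ag Ag_g] := Rb_inFs gRb.
exists (Num.max (Num.max (N - Af) (N - Ag)) Ag)%R => f' g' f'Rb g'Rb Mf Mg.
have Ag_g' : inFs Ag g'.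
  by rewrite -(ssubK g' g); apply: inFsD Ag_g; apply: inFs_le Mg; rewrite !le_max lexx orbT.
have fg' : smul f g' = sadd (smul f (ssub g' g)) (smul f g).
  by rewrite -{1}(ssubK g' g) smulDr //; exact: RbB.
have -> : ssub (smul f' g') (smul f g) =
    sadd (smul (ssub f' f) g') (smul f (ssub g' g)).
  rewrite smulBl // fg'; apply/funext => k.
  by rewrite /ssub /sadd opprD addrA addrAC subrK.
apply: inFsD.
  apply: inFs_le (inFs_smul (RbB f'Rb fRb) Mf Ag_g'); rewrite -lerBlDr !le_max lexx orbT //.
apply: inFs_le (inFs_smul fRb Af_f Mg); rewrite -lerBlDl !le_max lexx //.
Qed.

Lemma f_u_smul f g : Rb f -> Rb g -> f_u u f + f_u u g <= f_u u (smul f g).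
Proof.
move=> fRb gRb; apply: f_u_ge => A /(f_u_split fRb gRb)[a [/f_u_geP af /f_u_geP ag]].
by rewrite -[A](subrKC a); exact: inFs_smul.
Qed.

Lemma f_u_filtration : is_filtration_on (in_Rb u) (szero R) (@sadd R) smul (f_u u).
Proof.
split; first exact: f_u_szero.
split=> [f g _ _|f g /in_RbE fRb /in_RbE gRb]; first exact: f_u_sadd.
exact: f_u_smul.
Qed.

Lemma smul_skew_mult : skew_mult u sigma delta smul.
Proof.
do !split.
- by move=> f g /in_RbE fRb /in_RbE gRb; apply/in_RbE; exact: Rb_smul.
- by move=> f g h /in_RbE fRb /in_RbE gRb /in_RbE hRb; exact: smulA.
- by move=> f g h /in_RbE fRb /in_RbE gRb /in_RbE hRb; exact: smulDr.
- by move=> f g h /in_RbE fRb /in_RbE gRb /in_RbE hRb; exact: smulDl.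
- by move=> a f _; exact: smul_smono 0%N a f.
- by move=> a; rewrite /sX smul_smono sscal1 /= xmul_smono.
- by move=> n; rewrite /sX smul_smono sscal1 /= xmul_smono sigma1 delta1 smono0 sadd0.
move=> f g /in_RbE fRb /in_RbE gRb N; have [M hM] := smul_cont fRb gRb N.
exists M => f' g' /in_RbE f'Rb /in_RbE g'Rb /f_u_geP Mf /f_u_geP Mg.
by apply/f_u_geP; exact: hM.
Qed.

Lemma inF_iter_sigma N y n : inF N y -> inF N (iter n sigma y).
Proof. by move=> Ny; elim: n => [|n IH] //=; exact: inF_sigma. Qed.

Lemma inF_iter_sigmaB N y n : inF N y -> inF (N + 1) (iter n sigma y - y)%R.
Proof.
move=> Ny; elim: n => [|n IH] /=; first by rewrite subrr; exact: inF0.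
rewrite -(subrKA (iter n sigma y)); apply: inFD IH.
exact/inF_sigmaB/inF_iter_sigma.
Qed.

Lemma xmulX_smono nu b j i : inF nu b -> exists2 E,
  iter i xmul (smono j b) = sadd (smono (i + j) (iter i sigma b)) E &
  inFs (nu + wt (i + j) + 1 / 2%:R) E.
Proof.
move=> nu_b; elim: i => [|i [E IH nu_E]].
  by exists (szero R); rewrite ?sadd0 //; exact: inFs0.
exists (sadd (smono (i + j) (delta (iter i sigma b))) (xmul E)).
  rewrite /= IH xmulD xmul_smono addSn.
  by apply/funext => k; rewrite /sadd [RHS]addrA.
apply: inFsD.
  move=> k; rewrite /smono; case: eqP => [->|_]; last exact: inF0.
  by apply: inF_le (inF_delta (inF_iter_sigma i nu_b)); rewrite addSn wtS; lra.
by apply: inFs_le (inFs_xmul nu_E); rewrite addSn wtS; lra.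
Qed.

Lemma smul_gr_mult : gr_mult u smul.
Proof.
move=> mu nu a b i j mu_a nu_b; have [E xE nu_E] := xmulX_smono j i nu_b.
rewrite smul_smono xE.
apply: (@lt_le_trans _ _ ((mu + nu)%:~R + wt (i + j) + 1 / 2%:R)%R%:E).
  by rewrite lte_fin /wt; lra.
apply/f_u_geP => k; rewrite /ssub /sscal /sadd /smono intrD.
case: eqP => [->|_]; last first.
  by rewrite add0r subr0; apply: inF_le (inFM mu_a (nu_E k)); lra.
rewrite (_ : (a * (_ + E _) - a * b = a * (iter i sigma b - b) + a * E (i + j)%N)%R);
  last by rewrite mulrDr mulrBr addrAC.
apply: inFD.
  by apply: inF_le (inFM mu_a (inF_iter_sigmaB i nu_b)); lra.
by apply: inF_le (inFM mu_a (nu_E (i + j)%N)); lra.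
Qed.

(** * Uniqueness of the multiplication *)

Section Uniqueness.
Variable mul : ser R -> ser R -> ser R.
Hypothesis mul_skew : skew_mult u sigma delta mul.

Lemma mul_scvg s t f g : (forall n, Rb (s n)) -> (forall n, Rb (t n)) -> Rb f -> Rb g ->
  scvg s f -> scvg t g -> scvg (fun n => mul (s n) (t n)) (mul f g).
Proof.
case: mul_skew => _ [_ [_ [_ [_ [_ [_ mul_cont]]]]]] sRb tRb fRb gRb sf tg N.
have [M hM] := mul_cont f g (proj2 (in_RbE f) fRb) (proj2 (in_RbE g) gRb) N.
have [m1 h1] := sf M; have [m2 h2] := tg M.
exists (maxn m1 m2) => n; rewrite geq_max => /andP[/h1 sfn /h2 tgn].
by apply/f_u_geP; apply: hM; apply/f_u_geP || apply/in_RbE.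
Qed.

Lemma mul_sX_smono n b : mul (sX R) (smono n b) = xmul (smono n b).
Proof.
case: mul_skew => _ [mulA [_ [mulDl [mul_const [mul_xa [mul_xX _]]]]]].
have Rb_mono k c : in_Rb u (smono k c) by apply/in_RbE; exact: Rb_smono.
have Rb_const c : in_Rb u (sconst c) := Rb_mono 0%N c.
have Rb_X : in_Rb u (sX R) := Rb_mono 1%N 1%R.
have mono_const k c : smono k c = mul (sconst c) (smono k 1%R).
  by rewrite mul_const ?sscal_smono1.
(* [x (b x^n) = (x b) x^n = (sigma b x + delta b) x^n] *)
rewrite {1}mono_const -mulA // mul_xa mulDl // mul_const // sscal_smono1.
by rewrite [smono 1 _]mono_const mulA // mul_xX mul_const // !sscal_smono1 xmul_smono.
Qed.

Lemma mul_sX h : Rb h -> mul (sX R) h = xmul h.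
Proof.
case: mul_skew => _ [_ [mulDr _]] hRb.
have Rb_mono k c : in_Rb u (smono k c) by apply/in_RbE; exact: Rb_smono.
have Rb_tr n : in_Rb u (strunc n h) by apply/in_RbE; exact: Rb_strunc.
have Rb_X : in_Rb u (sX R) := Rb_mono 1%N 1%R.
have mul_sX_strunc n : mul (sX R) (strunc n h) = xmul (strunc n h).
  elim: n => [|n IH]; first by rewrite strunc0 -(smono0 0%N) mul_sX_smono.
  by rewrite struncS mulDr // IH mul_sX_smono xmulD.
apply: (scvg_uniq (s := fun n => mul (sX R) (strunc n h))).
  apply: (mul_scvg _ _ (Rb_smono 1 1) hRb (scvg_const _) (scvg_strunc hRb)).
    by move=> _; exact: Rb_smono.
  by move=> n; exact: Rb_strunc.
rewrite (_ : (fun n => _) = fun n => xmul (strunc n h)); last exact/funext.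
exact/scvg_xmul/scvg_strunc.
Qed.

Lemma mul_smono i a h : Rb h -> mul (smono i a) h = sscal a (iter i xmul h).
Proof.
case: mul_skew => _ [mulA [_ [_ [mul_const [_ [mul_xX _]]]]]] hRb.
have Rb_mono k c : in_Rb u (smono k c) by apply/in_RbE; exact: Rb_smono.
have Rb_X : in_Rb u (sX R) := Rb_mono 1%N 1%R.
have Rb_const c : in_Rb u (sconst c) := Rb_mono 0%N c.
have Rb_h : in_Rb u h by exact/in_RbE.
have mono1 k : mul (smono k 1%R) h = iter k xmul h.
  elim: k => [|k IH]; first by rewrite mul_const // sscal1.
  by rewrite -mul_xX mulA // IH mul_sX //; exact: Rb_xmulX.
rewrite -sscal_smono1 -mul_const // mulA // mono1 mul_const //.
by apply/in_RbE; exact: Rb_xmulX.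
Qed.

Lemma mul_strunc n f g : Rb g ->
  mul (strunc n f) g = spsum (fun i => sscal (f i) (iter i xmul g)) n.
Proof.
case: mul_skew => _ [_ [_ [mulDl _]]] gRb.
have Rb_mono k c : in_Rb u (smono k c) by apply/in_RbE; exact: Rb_smono.
have Rb_g : in_Rb u g by exact/in_RbE.
have Rb_tr k : in_Rb u (strunc k f) by apply/in_RbE; exact: Rb_strunc.
elim: n => [|n IH]; first by rewrite strunc0 -{1}(smono0 0%N) mul_smono // sscal0 spsum0.
by rewrite struncS spsumS mulDl // IH mul_smono.
Qed.

Lemma mul_eq_smul f g : in_Rb u f -> in_Rb u g -> mul f g = smul f g.
Proof.
move=> /in_RbE fRb /in_RbE gRb; have [B Bg] := Rb_inFs gRb.
apply: (scvg_uniq (s := fun n => mul (strunc n f) g)).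
  apply: (mul_scvg _ _ fRb gRb (scvg_strunc fRb) (scvg_const g)) => // n.
  exact: Rb_strunc.
rewrite (_ : (fun n => _) = spsum (fun i => sscal (f i) (iter i xmul g))).
  exact/scvg_ssum/vanishing_smul.
by apply/funext => n; exact: mul_strunc.
Qed.

End Uniqueness.

End SkewDerivation.

End Complete.

End FilteredRing.

Theorem proposition1p4p1 (R : pzRingType) (u : R -> \bar rat)
  (sigma delta : R -> R) :
  int_valued u -> filtration u -> separated_filt u ->
  complete_on (fun _ => True) (fun a b => (a - b)%R) u ->
  skew_derivation sigma delta -> compatible u sigma delta ->
  exists mul : ser R -> ser R -> ser R,
    (* (i) R^b is a left R-submodule, and a ring under a multiplication
       extending x a = σ(a) x + δ(a) continuously and R-linearly ... *)
    [/\ in_Rb u (szero R),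
        (forall f g, in_Rb u f -> in_Rb u g -> in_Rb u (sadd f g)),
        (forall f, in_Rb u f -> in_Rb u (sopp f)),
        (forall a f, in_Rb u f -> in_Rb u (sscal a f)) &
      [/\ skew_mult u sigma delta mul,
          in_Rb u (sone R),
          (forall f, in_Rb u f -> mul (sone R) f = f),
          (forall f, in_Rb u f -> mul f (sone R) = f) &
          (* ... in a unique way *)
          (forall mul', skew_mult u sigma delta mul' ->
             forall f g, in_Rb u f -> in_Rb u g -> mul' f g = mul f g)]] /\
    (* (ii) *)
    [/\ halfint_valued (in_Rb u) (f_u u),
        is_filtration_on (in_Rb u) (szero R) (@sadd R) mul (f_u u),
        (forall a, f_u u (sconst a) = u a),
        complete_on (in_Rb u) (@ssub R) (f_u u) &
        gr_iso u mul /\ gr_mult u mul].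
Proof.
move=> u_int u_filt u_sep u_comp sd cmp.
exists (smul u sigma delta); split; split.
- exact/in_RbE/Rb0.
- by move=> f g /in_RbE fRb /in_RbE gRb; apply/in_RbE; exact: RbD.
- by move=> f /in_RbE fRb; apply/in_RbE; exact: RbN.
- by move=> a f /in_RbE fRb; apply/in_RbE; exact: Rb_scal.
- split.
  + exact: smul_skew_mult.
  + exact/in_RbE/Rb_smono.
  + by move=> f _; exact: sone_smul.
  + by move=> f _; exact: smul_sone.
  + by move=> mul mul_skew f g fRb gRb; exact: mul_eq_smul.
- by move=> f /in_RbE; exact: f_u_halfint.
- exact: f_u_filtration.
- exact: f_u_sconst.
- exact: Rb_complete.
- by split; [exact: f_u_gr_iso | exact: smul_gr_mult].
Qed.
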